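(* Let $\tau$ be a set of operation symbols and $X$ a set disjoint from $\tau$. Equip the set $T_\tau(X)$ of $\tau$-hyperterms over $X$ with the constants $\mathsf e_i^{\mathcal T}=\mathsf e_i$ ($i\ge 1$), $\sigma^{\mathcal T}=\sigma(\mathsf e_1,\mathsf e_2,\dots)$ ($\sigma\in\tau$), and operations $q_n^{\mathcal T}$ ($n\ge 0$) defined recursively by: $q_n^{\mathcal T}(\mathsf e_i,t_1,\dots,t_n)=t_i$ for $1\le i\le n$; $q_n^{\mathcal T}(\mathsf e_i,t_1,\dots,t_n)=\mathsf e_i$ for $i>n$; and for $w\in\tau\cup X$, $q_n^{\mathcal T}(w(t_1,\dots,t_k,\mathsf e_{k+1},\mathsf e_{k+2},\dots),\bar u)=w(q_n^{\mathcal T}(t_1,\bar u),\dots,q_n^{\mathcal T}(t_k,\bar u),q_n^{\mathcal T}(\mathsf e_{k+1},\bar u),q_n^{\mathcal T}(\mathsf e_{k+2},\bar u),\dots)$, where $\bar u=u_1,\dots,u_n$. Then $\mathcal T_\tau(X)=(T_\tau(X),q_n^{\mathcal T},\mathsf e_i^{\mathcal T},\sigma^{\mathcal T})$ is a clone $\tau$-algebra, and it is the free clone $\tau$-algebra over the set $X$ of generators (each $x\in X$ identified with $x(\mathsf e_1,\mathsf e_2,\dots)$) in the variety of all clone $\tau$-algebras: for every clone $\tau$-algebra $\mathcal C$ and every map $\alpha:X\to C$ there is a unique homomorphism $\mathcal T_\tau(X)\to\mathcal C$ extending $\alpha$. In particular, for $X=\emptyset$, $\mathcal T_\tau=\mathcal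 T_\tau(\emptyset)$ is initial in the class of clone $\tau$-algebras.
   Context: A clone $\tau$-algebra is an algebra $\mathcal C=(C,q_n^{\mathcal C},\mathsf e_i^{\mathcal C},\sigma^{\mathcal C})_{n\ge 0,i\ge1,\sigma\in\tau}$ where $\mathsf e_i^{\mathcal C},\sigma^{\mathcal C}\in C$ are constants and $q_n^{\mathcal C}$ is an $(n+1)$-ary operation, satisfying the identities: (C1) $q_n(\mathsf e_i,x_1,\dots,x_n)=x_i$ for $1\le i\le n$; (C2) $q_n(\mathsf e_j,x_1,\dots,x_n)=\mathsf e_j$ for $j>n$; (C3) $q_n(x,\mathsf e_1,\dots,\mathsf e_n)=x$; (C4) $q_n(x,y_1,\dots,y_n)=q_k(x,y_1,\dots,y_n,\mathsf e_{n+1},\dots,\mathsf e_k)$ for $k>n$; (C5) $q_n(q_n(x,y_1,\dots,y_n),z_1,\dots,z_n)=q_n(x,q_n(y_1,z_1,\dots,z_n),\dots,q_n(y_n,z_1,\dots,z_n))$. These form a variety. The set $T_\tau(X)$ of $\tau$-hyperterms over $X$ is the least set containing the symbols $\mathsf e_1,\mathsf e_2,\dots$ and containing the formal expression $w(t_1,\dots,t_n,\mathsf e_{n+1},\mathsf e_{n+2},\dots)$ whenever $w\in\tau\cup X$, $n\ge 0$ and $t_1,\dots,t_n\in T_\tau(X)$ (an infinite argument list which is eventually $\mathsf e_{k},\mathsf e_{k+1},\dots$ in positions $k$). *)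

From mathcomp Require Import all_boot.
Set Implicit Arguments. Unset Strict Implicit. Unset Printing Implicit Defensive.

(* Conventions: the constant e_{i+1} is written [e i] (0-based indices).
   The family (q_n)_{n>=0} is encoded by one operation [q x ys] where
   n = size ys, i.e. q x [:: y1; ...; yn] = q_n(x, y1, ..., yn). *)

Record clone_alg (tau : Type) := CloneAlg {
  ca_car :> Type;
  ca_q : ca_car -> seq ca_car -> ca_car;
  ca_e : nat -> ca_car;
  ca_sig : tau -> ca_car }.
Arguments ca_q {tau} c.
Arguments ca_e {tau} c.
Arguments ca_sig {tau} c.

Definition clone_axioms (tau : Type) (A : clone_alg tau) : Prop :=
  [/\ forall (i : nat) (xs : seq A), i < size xs ->
          ca_q A (ca_e A i) xs = nth (ca_e A i) xs i,
      forall (i : nat) (xs : seq A), size xs <= i ->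
          ca_q A (ca_e A i) xs = ca_e A i,
      forall (x : A) (n : nat), ca_q A x (mkseq (ca_e A) n) = x,
      forall (x : A) (ys : seq A) (m : nat),
          ca_q A x ys = ca_q A x (ys ++ map (ca_e A) (iota (size ys) m))
    & forall (x : A) (ys zs : seq A), size ys = size zs ->
          ca_q A (ca_q A x ys) zs = ca_q A x (map (fun y => ca_q A y zs) ys)].

Definition is_hom (tau : Type) (A B : clone_alg tau) (f : A -> B) : Prop :=
  [/\ forall (x : A) (ys : seq A), f (ca_q A x ys) = ca_q B (f x) (map f ys),
      forall i, f (ca_e A i) = ca_e B i
    & forall s, f (ca_sig A s) = ca_sig B s].

(* Raw hyperterms: [RE i] is e_{i+1}; [RApp w [:: t1; ..; tk]] is
   w(t1,...,tk,e_{k+1},e_{k+2},...).  Distinct raw terms may denote the same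
   formal expression (trailing e_j in position j); [canon] selects the
   canonical representative (no such trailing argument). *)
Inductive rterm (tau X : Type) :=
| RE of nat
| RApp of (tau + X) & seq (rterm tau X).
Arguments RE {tau X}.

Section Hyperterms.
Variables tau X : Type.
Local Notation rt := (rterm tau X).

Definition isE (t : rt) (j : nat) : bool :=
  if t is RE i then i == j else false.

Definition good_last (ts : seq rt) : bool :=
  match rev ts with [::] => true | t :: r => ~~ isE t (size r) end.

Fixpoint canon (t : rt) : bool :=
  match t with
  | RE _ => true
  | RApp _ ts => all canon ts && good_last ts
  end.

Fixpoint trim_rev (r : seq rt) : seq rt :=
  match r with
  | [::] => [::]
  | t :: r' => if isE t (size r') then trim_rev r' else r
  end.

Definition trim (ts : seq rt) : seq rt := rev (trim_rev (rev ts)).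

Fixpoint norm (t : rt) : rt :=
  match t with
  | RE i => RE i
  | RApp w ts => RApp w (trim (map norm ts))
  end.

Fixpoint qr (t : rt) (us : seq rt) : rt :=
  match t with
  | RE i => nth (RE i) us i
  | RApp w ts => RApp w (map (fun t' => qr t' us) ts ++ drop (size ts) us)
  end.

Lemma all_trim_rev (P : pred rt) (r : seq rt) : all P r -> all P (trim_rev r).
Proof.
elim: r => [|t r IH] //= /andP[Pt Pr].
by case: ifP => _; [apply: IH | rewrite /= Pt].
Qed.

Lemma good_trim (ts : seq rt) : good_last (trim ts).
Proof.
rewrite /good_last /trim revK.
elim: (rev ts) => [|t r IH] //=.
case: ifP => [_|Hn] //=.
by rewrite Hn.
Qed.

Lemma all_trim (P : pred rt) (ts : seq rt) : all P ts -> all P (trim ts).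
Proof. by move=> H; rewrite /trim all_rev; apply: all_trim_rev; rewrite all_rev. Qed.

Fixpoint canon_norm (t : rt) : canon (norm t).
Proof.
case: t => [i|w ts] //=.
rewrite good_trim andbT; apply: all_trim.
elim: ts => [|t ts IH] //=.
by rewrite canon_norm IH.
Qed.

Definition hterm := {t : rt | canon t}.

Definition hq (x : hterm) (ys : seq hterm) : hterm :=
  exist _ (norm (qr (sval x) (map sval ys))) (canon_norm _).

Definition he (i : nat) : hterm := exist _ (RE i) erefl.

Definition hsig (s : tau) : hterm := exist _ (RApp (inl s) [::]) erefl.

Definition hgen (x : X) : hterm := exist _ (RApp (inr x) [::]) erefl.

Definition HTerm : clone_alg tau := @CloneAlg tau hterm hq he hsig.

End Hyperterms.

From mathcomp Require Import all_boot.
Set Implicit Arguments. Unset Strict Implicit. Unset Printing Implicit Defensive.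

(* A hyperterm w(t_1,...,t_k,e_{k+1},...) is determined by its infinite argument
   list, and trimming the trailing e_j's makes the passage from raw argument lists
   to canonical ones injective.  So every identity between hyperterms reduces to an
   argumentwise identity between raw terms, where the clauses defining q_n give
   (C1)-(C5) by structural induction.  Dually, in a clone algebra q_n(a, s) only
   depends on the argument list s, e_{n+1}, e_{n+2}, ... thanks to (C4); hence
   evaluation of raw terms factors through normalisation and, by (C4) and (C5),
   commutes with substitution.  Uniqueness holds because every canonical term
   w(t_1,...,t_k) is q_k(w, t_1,...,t_k). *)

Lemma nth_map_dflt (T U : Type) (f : T -> U) (x : T) (s : seq T) (p : nat) :
  nth (f x) (map f s) p = f (nth x s p).
Proof.
by case: (ltnP p (size s)) => Hp; [rewrite (nth_map x) | rewrite !nth_default ?size_map].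
Qed.

Lemma nth_cat_iota (T : Type) (f : nat -> T) (s : seq T) (m p : nat) :
  nth (f p) (s ++ map f (iota (size s) m)) p = nth (f p) s p.
Proof.
rewrite nth_cat; case: ltnP => // Hp; rewrite [nth _ s _]nth_default //.
case: (ltnP (p - size s) m) => Hm; last by rewrite nth_default // size_map size_iota.
by rewrite (nth_map 0) ?size_iota // nth_iota // subnKC.
Qed.

Section RawTerms.
Variables tau X : Type.
Local Notation rt := (rterm tau X).
Local Notation norm := (@norm tau X).
Local Notation qr := (@qr tau X).
Local Notation trim := (@trim tau X).

(* The argument at (0-based) position p of w(ts, e_{k+1}, e_{k+2}, ...). *)
Definition argn (ts : seq rt) (p : nat) : rt := nth (RE p) ts p.

Section ArgnInduction.
Variable P : rt -> Prop.
Hypothesis P_RE : forall i, P (RE i).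
Hypothesis P_RApp : forall w ts, (forall p, P (argn ts p)) -> P (RApp w ts).

Fixpoint rterm_argn_ind (t : rt) : P t :=
  match t with
  | RE i => P_RE i
  | RApp w ts => @P_RApp w ts (fun p =>
      (fix nthP (s : seq rt) : forall d p, P d -> P (nth d s p) :=
         match s return forall d p, P d -> P (nth d s p) with
         | [::] => fun d p Pd => match p return P (nth d [::] p) with
                                 | 0 => Pd | _.+1 => Pd end
         | x :: s' => fun d p Pd => match p return P (nth d (x :: s') p) with
                                    | 0 => rterm_argn_ind x | p'.+1 => nthP s' d p' Pd end
         end) ts (RE p) p (P_RE p))
  end.

End ArgnInduction.

Lemma argn_all (P : pred rt) (ts : seq rt) (p : nat) :
  all P ts -> P (RE p) -> P (argn ts p).
Proof.
move=> /all_nthP Pts PE; rewrite /argn.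
by case: (ltnP p (size ts)) => Hp; [apply: Pts | rewrite nth_default].
Qed.

Lemma trim_rcons (ts : seq rt) (t : rt) :
  trim (rcons ts t) = if isE t (size ts) then trim ts else rcons ts t.
Proof. by rewrite /trim rev_rcons /= size_rev; case: ifP; rewrite // rev_cons revK. Qed.

Lemma good_last_rcons (ts : seq rt) (t : rt) :
  good_last (rcons ts t) = ~~ isE t (size ts).
Proof. by rewrite /good_last rev_rcons size_rev. Qed.

Lemma argn_trim (ts : seq rt) (p : nat) : argn (trim ts) p = argn ts p.
Proof.
elim/last_ind: ts => [//|ts t IH]; rewrite trim_rcons; case: ifP => [|_ //].
rewrite IH /argn nth_rcons; case: t => // i /= /eqP ->.
case: ltnP => // Hp; rewrite nth_default //.
by case: eqP => // ->.
Qed.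

Lemma good_last_size_le (ts us : seq rt) : good_last us ->
  (forall p, argn ts p = argn us p) -> size us <= size ts.
Proof.
move=> good_us E; rewrite leqNgt; apply/negP.
case/lastP: us good_us E => [//|us u] good_us E; rewrite size_rcons ltnS => Hsize.
have := E (size us); rewrite /argn nth_rcons ltnn eqxx nth_default // => Eu.
by move: good_us; rewrite good_last_rcons -Eu /= eqxx.
Qed.

Lemma argn_inj (ts us : seq rt) : good_last ts -> good_last us ->
  (forall p, argn ts p = argn us p) -> ts = us.
Proof.
move=> good_ts good_us E.
have Hsize : size ts = size us.
  by apply/eqP; rewrite eqn_leq !good_last_size_le // => p; rewrite E.
apply: (eq_from_nth (x0 := RE 0)) => // i Hi.
by rewrite (set_nth_default (RE i)) // [RHS](set_nth_default (RE i)) -?Hsize //; apply: E.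
Qed.

Lemma argn_map_norm (ts : seq rt) (p : nat) : argn (map norm ts) p = norm (argn ts p).
Proof. exact: (nth_map_dflt norm (RE p)). Qed.

Lemma eq_norm_RApp w (ts us : seq rt) :
  (forall p, norm (argn ts p) = norm (argn us p)) -> norm (RApp w ts) = norm (RApp w us).
Proof.
move=> E /=; congr RApp; apply: argn_inj; rewrite ?good_trim // => p.
by rewrite !argn_trim !argn_map_norm.
Qed.

Lemma norm_idem (t : rt) : norm (norm t) = norm t.
Proof.
elim/rterm_argn_ind: t => [//|w ts IH].
rewrite [norm (RApp w ts)]/=; apply: eq_norm_RApp => p.
by rewrite argn_trim argn_map_norm IH.
Qed.

Lemma norm_canon (t : rt) : canon t -> norm t = t.
Proof.
elim/rterm_argn_ind: t => [//|w ts IH] /= /andP[canon_ts good_ts]; congr RApp.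
apply: argn_inj; rewrite ?good_trim // => p.
by rewrite argn_trim argn_map_norm IH //; apply: argn_all.
Qed.

Lemma argn_qr (ts us : seq rt) (p : nat) :
  argn (map (qr^~ us) ts ++ drop (size ts) us) p = qr (argn ts p) us.
Proof.
rewrite /argn nth_cat size_map; case: ltnP => Hp; first by rewrite (nth_map (RE p)).
by rewrite nth_drop subnKC // [nth _ ts _]nth_default.
Qed.

Lemma norm_qr_norm_args (t : rt) (us : seq rt) :
  norm (qr t (map norm us)) = norm (qr t us).
Proof.
elim/rterm_argn_ind: t => [i|w ts IH]; last by apply: eq_norm_RApp => p; rewrite !argn_qr.
by rewrite /= -{1}[RE i]/(norm (RE i)) nth_map_dflt norm_idem.
Qed.

Lemma norm_qr_norm (t : rt) (us : seq rt) : norm (qr (norm t) us) = norm (qr t us).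
Proof.
elim/rterm_argn_ind: t => [//|w ts IH].
by apply: eq_norm_RApp => p; rewrite !argn_qr argn_trim argn_map_norm IH.
Qed.

Lemma norm_qr_qr (t : rt) (ys zs : seq rt) : size ys = size zs ->
  norm (qr (qr t ys) zs) = norm (qr t (map (qr^~ zs) ys)).
Proof.
move=> Hsize; elim/rterm_argn_ind: t => [i|w ts IH].
  rewrite /=; case: (ltnP i (size ys)) => Hi; first by rewrite (nth_map (RE i)).
  by rewrite nth_default //= !nth_default ?size_map -?Hsize.
by apply: eq_norm_RApp => p; rewrite !argn_qr IH.
Qed.

Lemma norm_qr_pad (t : rt) (ys : seq rt) (m : nat) :
  norm (qr t (ys ++ map RE (iota (size ys) m))) = norm (qr t ys).
Proof.
elim/rterm_argn_ind: t => [i|w ts IH]; first by rewrite /= nth_cat_iota.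
by apply: eq_norm_RApp => p; rewrite !argn_qr.
Qed.

Lemma norm_qr_mkseq (t : rt) (n : nat) : norm (qr t (mkseq RE n)) = norm t.
Proof.
elim/rterm_argn_ind: t => [i|w ts IH].
  by rewrite /=; case: (ltnP i n) => Hi; [rewrite nth_mkseq | rewrite nth_default ?size_mkseq].
apply: eq_norm_RApp => p; rewrite argn_qr IH /argn.
by case: (ltnP p (size ts)) => // Hp; rewrite nth_default.
Qed.

End RawTerms.

Section Hyperterms.
Variables tau X : Type.
Local Notation HT := (HTerm tau X).
Local Notation canon := (@canon tau X).

Lemma norm_val (t : hterm tau X) : norm (val t) = val t.
Proof. by apply: norm_canon; case: t. Qed.

Lemma hterm_clone_axioms : clone_axioms HT.
Proof.
split.
- move=> i ts Hi; apply: val_inj => /=.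
  by rewrite (nth_map (he tau X i)) // norm_val.
- by move=> i ts Hi; apply: val_inj => /=; rewrite nth_default ?size_map.
- move=> t n; apply: val_inj => /=.
  by rewrite /mkseq -map_comp norm_qr_mkseq norm_val.
- move=> t ts m; apply: val_inj => /=.
  by rewrite map_cat -map_comp -(size_map val) norm_qr_pad.
- move=> t ys zs Hsize; apply: val_inj => /=.
  rewrite norm_qr_norm norm_qr_qr ?size_map // -norm_qr_norm_args -!map_comp.
  by congr (norm (qr _ _)); apply: eq_map.
Qed.

Definition hhead (w : tau + X) : hterm tau X :=
  match w with inl s => @hsig tau X s | inr x => hgen tau x end.

Lemma map_val_pmap_insub (ts : seq (rterm tau X)) :
  all canon ts -> map val (pmap insub ts : seq (hterm tau X)) = ts.
Proof.
move=> /all_filterP canon_ts.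
by rewrite (pmap_filter (insubK _)) (eq_filter (isSome_insub _)) canon_ts.
Qed.

Lemma hterm_RApp w (ts : seq (rterm tau X)) (c : canon (RApp w ts)) :
  exist _ (RApp w ts) c = hq (hhead w) (pmap insub ts).
Proof.
have /andP[canon_ts _] := c.
apply: val_inj; rewrite /= map_val_pmap_insub //.
by case: w c => [s|x] c; rewrite -{1}(norm_canon c) /= drop0.
Qed.

End Hyperterms.

Section Evaluation.
Variables (tau X : Type) (C : clone_alg tau).
Hypothesis C_clone : clone_axioms C.
Variable alpha : X -> C.
Local Notation rt := (rterm tau X).
Local Notation q := (ca_q C).
Local Notation e := (ca_e C).
Local Notation canon := (@canon tau X).

Lemma q_e_lt (i : nat) (xs : seq C) : i < size xs -> q (e i) xs = nth (e i) xs i.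
Proof. by case: C_clone => C1 _ _ _ _; apply: C1. Qed.

Lemma q_e_ge (i : nat) (xs : seq C) : size xs <= i -> q (e i) xs = e i.
Proof. by case: C_clone => _ C2 _ _ _; apply: C2. Qed.

Lemma q_mkseq_e (x : C) (n : nat) : q x (mkseq e n) = x.
Proof. by case: C_clone => _ _ C3 _ _; apply: C3. Qed.

Lemma q_pad (x : C) (ys : seq C) (m : nat) : q x ys = q x (ys ++ map e (iota (size ys) m)).
Proof. by case: C_clone => _ _ _ C4 _; apply: C4. Qed.

Lemma q_comp (x : C) (ys zs : seq C) : size ys = size zs ->
  q (q x ys) zs = q x (map (q^~ zs) ys).
Proof. by case: C_clone => _ _ _ _ C5; apply: C5. Qed.

Lemma size_pad (s : seq C) (n : nat) : size s <= n ->
  size (s ++ map e (iota (size s) (n - size s))) = n.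
Proof. by move=> Hn; rewrite size_cat size_map size_iota subnKC. Qed.

Lemma eq_q_args (x : C) (s1 s2 : seq C) :
  (forall p, nth (e p) s1 p = nth (e p) s2 p) -> q x s1 = q x s2.
Proof.
move=> E; set n := size s1 + size s2.
have [le1 le2] : size s1 <= n /\ size s2 <= n by rewrite leq_addr leq_addl.
rewrite (q_pad x s1 (n - size s1)) (q_pad x s2 (n - size s2)); congr (q x _).
apply: (eq_from_nth (x0 := e 0)) => [|i]; rewrite !size_pad // => Hi.
rewrite (set_nth_default (e i)) ?size_pad // [RHS](set_nth_default (e i)) ?size_pad //.
by rewrite !nth_cat_iota.
Qed.

Definition eval_head (w : tau + X) : C :=
  match w with inl s => ca_sig C s | inr x => alpha x end.

Fixpoint eval (t : rt) : C :=
  match t with RE i => e i | RApp w ts => q (eval_head w) (map eval ts) end.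

Lemma nth_map_eval (ts : seq rt) (p : nat) : nth (e p) (map eval ts) p = eval (argn ts p).
Proof. exact: (nth_map_dflt eval (RE p)). Qed.

Lemma eval_norm (t : rt) : eval (norm t) = eval t.
Proof.
elim/rterm_argn_ind: t => [//|w ts IH] /=.
by apply: eq_q_args => p; rewrite !nth_map_eval argn_trim argn_map_norm IH.
Qed.

Lemma eval_qr_RE (i : nat) (us : seq rt) : eval (qr (RE i) us) = q (e i) (map eval us).
Proof.
rewrite /=; case: (ltnP i (size us)) => Hi.
  by rewrite q_e_lt ?size_map // (nth_map (RE i)).
by rewrite q_e_ge ?size_map // nth_default.
Qed.

(* Pad both argument lists to a common length n, so that (C5) applies. *)
Lemma eval_qr (t : rt) (us : seq rt) : eval (qr t us) = q (eval t) (map eval us).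
Proof.
elim/rterm_argn_ind: t => [i|w ts IH]; first exact: eval_qr_RE.
rewrite [eval (RApp w ts)]/= [eval (qr _ _)]/=.
set T := map eval ts; set U := map eval us; set n := size T + size U.
have [leT leU] : size T <= n /\ size U <= n by rewrite leq_addr leq_addl.
rewrite (q_pad _ U (n - size U)) (q_pad _ T (n - size T)) q_comp ?size_pad //.
apply: eq_q_args => p; rewrite nth_map_eval argn_qr.
case: (ltnP p n) => Hp.
  rewrite (nth_map (e p)) ?size_pad // nth_cat_iota nth_map_eval -q_pad.
  exact: IH.
rewrite [RHS]nth_default; last by rewrite size_map size_pad.
rewrite /argn nth_default; last by rewrite -(size_map eval); apply: leq_trans leT Hp.
by rewrite eval_qr_RE q_e_ge //; apply: leq_trans leU Hp.
Qed.

Definition heval (t : HTerm tau X) : C := eval (val t).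

Lemma eval_RApp_nil (w : tau + X) : eval (RApp w [::]) = eval_head w.
Proof. exact: (q_mkseq_e _ 0). Qed.

Lemma heval_hom : is_hom heval.
Proof.
split=> [t ts|//|s]; last exact: (eval_RApp_nil (inl s)).
by rewrite /heval /= eval_norm eval_qr -map_comp.
Qed.

Lemma heval_gen (x : X) : heval (hgen tau x) = alpha x.
Proof. exact: (eval_RApp_nil (inr x)). Qed.

Lemma heval_unique (h : HTerm tau X -> C) : is_hom h ->
  (forall x, h (hgen tau x) = alpha x) -> forall t, h t = heval t.
Proof.
case=> h_q h_e h_sig h_gen.
suff hE : forall t (c : canon t), h (exist _ t c) = eval t by case=> t c; apply: hE.
elim/rterm_argn_ind => [i|w ts IH] c.
  by rewrite /= -h_e; congr h; apply: val_inj.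
have /andP[canon_ts _] := c.
rewrite hterm_RApp h_q /=; congr (ca_q C _ _).
  by case: w {IH c} => [s|x] /=; rewrite ?h_sig ?h_gen.
have Hsize : size (pmap insub ts : seq (hterm tau X)) = size ts.
  by rewrite -(size_map val) map_val_pmap_insub.
apply: (eq_from_nth (x0 := e 0)) => [|i]; rewrite !size_map // Hsize => Hi.
rewrite (nth_map (he tau X i)) ?Hsize // (nth_map (RE i)) //.
have canon_i : canon (argn ts i) by apply: argn_all.
rewrite -(IH i canon_i); congr h; apply: val_inj.
by rewrite /= /argn -{2}(map_val_pmap_insub canon_ts) (nth_map (he tau X i)) ?Hsize.
Qed.

End Evaluation.

Theorem mainTheorem1 (tau X : Type) :
  clone_axioms (HTerm tau X) /\
  (forall (C : clone_alg tau), clone_axioms C ->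
     forall alpha : X -> C,
       exists h : HTerm tau X -> C,
         [/\ is_hom h,
             (forall x, h (hgen tau x) = alpha x) &
             (forall h' : HTerm tau X -> C, is_hom h' ->
                (forall x, h' (hgen tau x) = alpha x) -> forall t, h' t = h t)]) /\
  (forall (C : clone_alg tau), clone_axioms C ->
       exists h : HTerm tau void -> C,
         is_hom h /\ (forall h' : HTerm tau void -> C, is_hom h' -> forall t, h' t = h t)).
Proof.
split; first exact: hterm_clone_axioms.
split=> [C C_clone alpha | C C_clone].
  exists (heval alpha); split; [exact: heval_hom | exact: heval_gen |].
  exact: heval_unique.
pose alpha (v : void) : C := match v with end.
exists (heval alpha); split; first exact: heval_hom.
by move=> h h_hom; apply: heval_unique => // [[]].
Qed.
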